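(* Let $a,b,e\in\mathbb Z$ with $a\neq0$, $e>0$, such that $h_2(j)=aj^2+bj+e$ satisfies $h_2(j)\ge0$ for all integers $j\ge0$ (so $h_2\in\mathcal H_0$). If $b<0$ and $b^2>4ae$, then $\operatorname{hdepth}(h_2)\le 13$.
   Context: Let $\mathcal H_0$ denote the set of functions $h:\mathbb Z_{\ge 0}\to\mathbb Z_{\ge 0}$ with $h(0)>0$. For $h\in\mathcal H_0$ and integers $0\le k\le d$, put $\beta_k^d(h)=\sum_{j=0}^k(-1)^{k-j}\binom{d-j}{k-j}h(j)$. The Hilbert depth of $h$ is $\operatorname{hdepth}(h)=\max\{d\in\mathbb Z_{\ge0}:\ \beta_k^d(h)\ge 0\text{ for all }0\le k\le d\}$; this set contains $d=0$ and is known to be bounded above by $\lfloor h(1)/h(0)\rfloor$, so the maximum exists. *)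

From mathcomp Require Import all_boot all_order all_algebra.
Set Implicit Arguments. Unset Strict Implicit. Unset Printing Implicit Defensive.
Import Order.TTheory GRing.Theory Num.Theory.
Local Open Scope ring_scope.

Definition beta (h : nat -> nat) (d k : nat) : int :=
  \sum_(j < k.+1) (-1) ^+ (k - j)%N * ('C(d - j, k - j))%:Z * (h j)%:Z.

Definition hdepth_adm (h : nat -> nat) (d : nat) : Prop :=
  forall k : nat, (k <= d)%N -> 0 <= beta h d k.

(* hdepth h <= n  iff  every admissible d is <= n (hdepth is the max of the admissible d) *)
Definition hdepth_le (h : nat -> nat) (n : nat) : Prop :=
  forall d : nat, hdepth_adm h d -> (d <= n)%N.

From mathcomp Require Import all_boot all_order all_algebra.
From mathcomp Require Import zify ring lra.

(* For d = n + 3 the combination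
     3 (n+1)(n-4) beta_1^d + 6 (n-2) beta_2^d + 6 beta_3^d
   equals 6 Delta^3 h(0) - p(n-11) h(0), where p(x) = x^3 + 30x^2 + 281x + 792
   has positive coefficients.  The weights are nonnegative once n >= 4, so if
   d >= 14, h(0) > 0 and the third difference Delta^3 h(0) is <= 0 (it vanishes
   for a quadratic), one of beta_1^d, beta_2^d, beta_3^d must be negative. *)

Set Implicit Arguments.
Unset Strict Implicit.
Unset Printing Implicit Defensive.
Import Order.TTheory GRing.Theory Num.Theory.
Local Open Scope ring_scope.

Lemma mul_bin2z n : ('C(n, 2))%:Z * 2 = n%:Z * (n%:Z - 1).
Proof.
have := bin_ffact n 2; rewrite !ffactnS ffactn0 muln1 !factS fact0.
case: n => [//|n] /=; nia.
Qed.

Lemma mul_bin3z n : ('C(n, 3))%:Z * 6 = n%:Z * (n%:Z - 1) * (n%:Z - 2).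
Proof.
have := bin_ffact n 3; rewrite !ffactnS ffactn0 muln1 !factS fact0.
case: n => [//|[//|n]] /=; nia.
Qed.

Definition diff3 (h : nat -> nat) : int :=
  (h 3%N)%:Z - 3 * (h 2%N)%:Z + 3 * (h 1%N)%:Z - (h 0%N)%:Z.

Definition depth_cubic (x : int) : int := x ^+ 3 + 30 * x ^+ 2 + 281 * x + 792.

Lemma beta123_combination (h : nat -> nat) (n : nat) :
  3 * (n%:Z + 1) * (n%:Z - 4) * beta h n.+3 1 + 6 * (n%:Z - 2) * beta h n.+3 2
    + 6 * beta h n.+3 3 = 6 * diff3 h - depth_cubic (n%:Z - 11) * (h 0%N)%:Z.
Proof.
set N := n%:Z; rewrite /beta !big_ord_recr big_ord0 /= !subSS !subn0 !bin0 !bin1 !big_ord0.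
have E3 : n.+3%:Z = N + 3 by rewrite /N; lia.
have E2 : n.+2%:Z = N + 2 by rewrite /N; lia.
have E1 : n.+1%:Z = N + 1 by rewrite /N; lia.
have B32 := mul_bin2z n.+3; have B22 := mul_bin2z n.+2; have B33 := mul_bin3z n.+3.
rewrite E3 E2 E1 in B32 B22 B33 *.
apply/eqP; rewrite -subr_eq0; apply/eqP.
transitivity (3 * (N - 2) * (h 0%N)%:Z * (('C(n.+3, 2))%:Z * 2 - (N + 3) * (N + 3 - 1))
  + 3 * (h 1%N)%:Z * (('C(n.+2, 2))%:Z * 2 - (N + 2) * (N + 2 - 1))
  - (h 0%N)%:Z * (('C(n.+3, 3))%:Z * 6 - (N + 3) * (N + 3 - 1) * (N + 3 - 2))).
  by rewrite /diff3 /depth_cubic; ring.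
by rewrite B32 B22 B33 !subrr !mulr0 subr0 addr0.
Qed.

Lemma depth_cubic_gt0 (x : int) : 0 <= x -> 0 < depth_cubic x.
Proof.
move=> x_ge0; rewrite /depth_cubic.
have := exprn_ge0 3 x_ge0; have := exprn_ge0 2 x_ge0; lra.
Qed.

Lemma hdepth_le13_diff3_le0 (h : nat -> nat) :
  (0 < h 0%N)%N -> diff3 h <= 0 -> hdepth_le h 13.
Proof.
move=> h0_gt0 diff3_le0 d adm; rewrite leqNgt; apply/negP => d_gt13.
have [n dn] : exists n, d = n.+3 by exists (d - 3)%N; lia.
rewrite {}dn in adm d_gt13.
have n_ge11 : 11 <= n%:Z by lia.
have := beta123_combination h n.
have : 0 <= 3 * (n%:Z + 1) * (n%:Z - 4) * beta h n.+3 1.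
  by apply: mulr_ge0; [apply: mulr_ge0; lra | apply: adm; lia].
have : 0 <= 6 * (n%:Z - 2) * beta h n.+3 2.
  by apply: mulr_ge0; [apply: mulr_ge0; lra | apply: adm; lia].
have : 0 <= beta h n.+3 3 by apply: adm; lia.
have : 0 < depth_cubic (n%:Z - 11) * (h 0%N)%:Z.
  by apply: mulr_gt0; [apply: depth_cubic_gt0; lra | lia].
lra.
Qed.

Lemma diff3_quadratic (a b e : int) (h : nat -> nat) :
  (forall j : nat, (h j)%:Z = a * (j%:Z) ^+ 2 + b * j%:Z + e) -> diff3 h = 0.
Proof. by move=> hE; rewrite /diff3 !hE; ring. Qed.

Theorem theorem2p9 (a b e : int) (h2 : nat -> nat) :
  a != 0 -> 0 < e ->
  (forall j : nat, (h2 j)%:Z = a * (j%:Z) ^+ 2 + b * j%:Z + e) ->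
  b < 0 -> b ^+ 2 > 4 * a * e ->
  hdepth_le h2 13.
Proof.
(* Only e > 0 matters: the bound holds for every quadratic in H_0. *)
move=> _ e_gt0 h2E _ _; apply: hdepth_le13_diff3_le0.
- by have := h2E 0%N; rewrite expr0n /= mulr0 add0r => h0E; lia.
- by rewrite (diff3_quadratic h2E).
Qed.
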